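(* Let $Q=(q_n)_{n\ge1}$ be a basic sequence that is infinite in limit, and let $F$ be a $Q$-special sequence. Then $x_F$ is $Q$-distribution normal, i.e. the sequence $\left(q_1q_2\cdots q_n x_F \bmod 1\right)_{n=0}^{\infty}$ is uniformly distributed in $[0,1)$.
   Context: A basic sequence is a sequence $Q=(q_n)_{n\ge1}$ of integers with $q_n\ge 2$; it is infinite in limit if $q_n\to\infty$. $\mathbb{N}$ denotes the positive integers. For each positive integer $j$ let $\nu_j=\min\{N : q_m\ge 2j^2 \text{ for all } m\ge N\}$. Define $l_1=\max(\nu_2-1,1)$ and, recursively for $i\ge 2$, $l_i=\max\big(\min\{k\in\mathbb{N} : l_1+2l_2+\cdots+(i-1)l_{i-1}+ik\ge \nu_{i+1}-1\},1\big)$. Put $L_i=\sum_{j=1}^i jl_j$ (with $L_0=0$). Let $S_Q=\{(a,b,c)\in\mathbb{N}^3 : b\le l_a,\ c\le a\}$ and $\phi_Q(a,b,c)=L_{a-1}+(b-1)a+c$; $\phi_Q$ is a bijection $S_Q\to\mathbb{N}$. A $Q$-special sequence is a family of integers $F=(F_{(a,b,c)})_{(a,b,c)\in S_Q}$ with $F_{(a,b,1)}=0$ for all $(a,b,1)\in S_Q$ and $\frac{F_{(a,b,c)}}{q_{\phi_Q(a,b,c)}}\in\left[\frac{c-1}{a}-\frac{1}{2a^2},\frac{c-1}{a}+\frac{1}{2a^2}\right]$ for $(a,b,c)\in S_Q$ with $c>1$. For such $F$ put $E_{F,n}=F_{\phi_Q^{-1}(n)}$ and $x_F=\sum_{n=1}^\infty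 \frac{E_{F,n}}{q_1q_2\cdots q_n}$. *)

From Stdlib Require Import Reals Lra Lia Arith ZArith ClassicalEpsilon.
From Coquelicot Require Import Coquelicot.
Open Scope R_scope.

(* A basic sequence is q : nat -> nat, indexed from 1 (q 0 is unused). *)
Definition basic_sequence (q : nat -> nat) : Prop :=
  forall n : nat, (1 <= n)%nat -> (2 <= q n)%nat.

Definition infinite_in_limit (q : nat -> nat) : Prop :=
  forall M : nat, exists N : nat, forall n : nat, (N <= n)%nat -> (M <= q n)%nat.

(* Least natural number satisfying P (meaningful when P is inhabited). *)
Definition minN (P : nat -> Prop) : nat :=
  epsilon (inhabits 0%nat) (fun n => P n /\ forall m, P m -> (n <= m)%nat).

Definition nu (q : nat -> nat) (j : nat) : nat :=
  minN (fun N => (1 <= N)%nat /\ forall m, (N <= m)%nat -> (2 * j * j <= q m)%nat).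

Fixpoint lL (q : nat -> nat) (i : nat) : nat * nat :=
  match i with
  | O => (0%nat, 0%nat)
  | S i' =>
      let Lprev := snd (lL q i') in
      let li :=
        match i' with
        | O => Nat.max (nu q 2 - 1) 1
        | _ => Nat.max
                 (minN (fun k => (1 <= k)%nat /\ (nu q (i + 1) - 1 <= Lprev + i * k)%nat))
                 1
        end in
      (li, (Lprev + i * li)%nat)
  end.

Definition l_seq (q : nat -> nat) (i : nat) : nat := fst (lL q i).
Definition L_seq (q : nat -> nat) (i : nat) : nat := snd (lL q i).

Definition in_SQ (q : nat -> nat) (a b c : nat) : Prop :=
  (1 <= a)%nat /\ (1 <= b)%nat /\ (1 <= c)%nat /\ (b <= l_seq q a)%nat /\ (c <= a)%nat.

Definition phiQ (q : nat -> nat) (a b c : nat) : nat :=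
  (L_seq q (a - 1) + (b - 1) * a + c)%nat.

Definition phiQ_inv (q : nat -> nat) (n : nat) : nat * nat * nat :=
  epsilon (inhabits (0%nat, 0%nat, 0%nat))
    (fun t => let '(a, b, c) := t in in_SQ q a b c /\ phiQ q a b c = n).

(* Q-special sequence F : (a,b,c) |-> integer (values off S_Q irrelevant). *)
Definition Q_special (q : nat -> nat) (F : nat -> nat -> nat -> Z) : Prop :=
  forall a b c : nat, in_SQ q a b c ->
    (c = 1%nat -> F a b c = 0%Z) /\
    ((1 < c)%nat ->
       INR (c - 1) / INR a - 1 / (2 * INR a ^ 2)
         <= IZR (F a b c) / INR (q (phiQ q a b c))
       /\ IZR (F a b c) / INR (q (phiQ q a b c))
         <= INR (c - 1) / INR a + 1 / (2 * INR a ^ 2)).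

Definition E_F (q : nat -> nat) (F : nat -> nat -> nat -> Z) (n : nat) : Z :=
  let '(a, b, c) := phiQ_inv q n in F a b c.

Fixpoint qprod (q : nat -> nat) (n : nat) : R :=
  match n with
  | O => 1
  | S n' => qprod q n' * INR (q n)
  end.

Definition x_F (q : nat -> nat) (F : nat -> nat -> nat -> Z) : R :=
  Series (fun k => IZR (E_F q F (S k)) / qprod q (S k)).

Fixpoint count_in (y : nat -> R) (a b : R) (N : nat) : nat :=
  match N with
  | O => O
  | S N' => (count_in y a b N' +
             (if Rle_dec a (y N') then if Rlt_dec (y N') b then 1 else 0 else 0))%nat
  end.

Definition uniformly_distributed (y : nat -> R) : Prop :=
  forall a b : R, 0 <= a -> a < b -> b <= 1 ->
    is_lim_seq (fun N => INR (count_in y a b N) / INR N) (b - a).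

Definition Q_distribution_normal (q : nat -> nat) (x : R) : Prop :=
  uniformly_distributed (fun n => frac_part (qprod q n * x)).

From Stdlib Require Import Reals ZArith Lra Lia Arith Classical ClassicalEpsilon.
From Coquelicot Require Import Coquelicot.
Open Scope R_scope.

(* Group the indices into blocks: block a consists of l_a rounds of a
   consecutive indices, and the l_i are chosen so that q_m >= 2a^2 at every
   index m of block a.  At the j-th index n of a round (0 <= j < a) the digit
   gives E_{F,n+1} / q_{n+1} within 1/(2a^2) of j/a, and the tail of the Cantor
   series adds at most 1/q_{n+1} <= 1/(2a^2), so q_1...q_n x_F mod 1 lies within
   1/a^2 of j/a.  Hence every round puts (beta - alpha) a + O(1) of its points
   into [alpha, beta), and after N points the discrepancy is O(rounds so far)
   + O(a).  Both are o(N): l_i >= 1 gives L_a >= a(a+1)/2, and the blocks beyond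
   a fixed K contribute at most N/K rounds. *)

Lemma minN_spec (P : nat -> Prop) :
  (exists n, P n) -> P (minN P) /\ forall m, P m -> (minN P <= m)%nat.
Proof.
  intros [n Hn]; unfold minN; apply epsilon_spec.
  induction n as [n IH] using lt_wf_ind.
  destruct (classic (exists m, (m < n)%nat /\ P m)) as [[m [Hm Pm]] | Hno].
  - exact (IH m Hm Pm).
  - exists n; split; [exact Hn |].
    intros m Pm; destruct (le_lt_dec n m); [assumption |].
    exfalso; apply Hno; eauto.
Qed.

(** * The block structure of the index set *)

Section Blocks.

Variable q : nat -> nat.

Lemma L_seq_S i : L_seq q (S i) = (L_seq q i + S i * l_seq q (S i))%nat.
Proof. reflexivity. Qed.

Lemma l_seq_pos i : (1 <= l_seq q (S i))%nat.
Proof. destruct i; cbn [l_seq lL fst]; lia. Qed.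

Lemma L_seq_lt i j : (i < j)%nat -> (L_seq q i < L_seq q j)%nat.
Proof.
  induction j as [|j IH]; intros Hij; [lia |].
  rewrite L_seq_S; pose proof (l_seq_pos j).
  destruct (Nat.eq_dec i j) as [-> | Hne]; [nia |].
  specialize (IH ltac:(lia)); nia.
Qed.

Lemma L_seq_triangular i : (i * (i + 1) <= 2 * L_seq q i)%nat.
Proof.
  induction i as [|i IH]; [cbn; lia |].
  rewrite L_seq_S; pose proof (l_seq_pos i); nia.
Qed.

Lemma L_seq_bracket N : exists a, (L_seq q a <= N < L_seq q (S a))%nat.
Proof.
  assert (Hall : forall i, (N < L_seq q i)%nat ->
                   exists a, (L_seq q a <= N < L_seq q (S a))%nat).
  { induction i as [|i IH]; intros HN; [cbn in HN; lia |].
    destruct (le_lt_dec (L_seq q i) N); [exists i; lia | exact (IH ltac:(lia))]. }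
  apply (Hall (S N)); pose proof (L_seq_triangular (S N)); nia.
Qed.

Lemma index_decompose N : exists a b k,
  (b < l_seq q (S a))%nat /\ (k <= a)%nat /\ N = (L_seq q a + b * S a + k)%nat.
Proof.
  destruct (L_seq_bracket N) as [a Ha]; rewrite L_seq_S in Ha.
  set (r := (N - L_seq q a)%nat).
  exists a, (r / S a)%nat, (r mod S a).
  pose proof (Nat.div_mod_eq r (S a)); pose proof (Nat.mod_upper_bound r (S a) ltac:(lia)).
  assert ((r / S a < l_seq q (S a))%nat)
    by (apply Nat.Div0.div_lt_upper_bound; unfold r; lia).
  unfold r in *; lia.
Qed.

Lemma phiQ_range a b c : in_SQ q a b c ->
  (L_seq q (a - 1) < phiQ q a b c <= L_seq q a)%nat.
Proof.
  unfold in_SQ, phiQ; intros (Ha & Hb & Hc & Hbl & Hca).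
  destruct a as [|a]; [lia |].
  rewrite L_seq_S; replace (S a - 1)%nat with a by lia.
  assert ((b - 1) * S a <= (l_seq q (S a) - 1) * S a)%nat by (apply Nat.mul_le_mono_r; lia).
  nia.
Qed.

Lemma phiQ_inj a b c a' b' c' : in_SQ q a b c -> in_SQ q a' b' c' ->
  phiQ q a b c = phiQ q a' b' c' -> a = a' /\ b = b' /\ c = c'.
Proof.
  intros H H' E.
  pose proof (phiQ_range a b c H); pose proof (phiQ_range a' b' c' H').
  assert (Hblock : forall i j, (1 <= i < j)%nat -> (L_seq q i <= L_seq q (j - 1))%nat).
  { intros i j Hij; destruct (Nat.eq_dec i (j - 1)) as [<- | ?]; [lia |].
    apply Nat.lt_le_incl, L_seq_lt; lia. }
  assert (a = a') as <-.
  { destruct H as [Ha _], H' as [Ha' _].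
    destruct (lt_eq_lt_dec a a') as [[Hlt | ] | Hlt]; [| assumption |];
      [pose proof (Hblock a a') | pose proof (Hblock a' a)]; lia. }
  unfold phiQ, in_SQ in *.
  assert (b = b') as <-.
  { destruct (lt_eq_lt_dec b b') as [[Hlt | ] | Hlt]; [| assumption |];
      [assert ((b - 1) * a + a <= (b' - 1) * a)%nat | assert ((b' - 1) * a + a <= (b - 1) * a)%nat];
      nia. }
  lia.
Qed.

Lemma phiQ_surj m : (1 <= m)%nat -> exists a b c, in_SQ q a b c /\ phiQ q a b c = m.
Proof.
  intros Hm; destruct (index_decompose (m - 1)) as (a & b & k & Hb & Hk & E).
  exists (S a), (S b), (S k); unfold in_SQ, phiQ.
  replace (S a - 1)%nat with a by lia; replace (S b - 1)%nat with b by lia.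
  lia.
Qed.

Lemma E_F_phiQ F a b c : in_SQ q a b c -> E_F q F (phiQ q a b c) = F a b c.
Proof.
  intros H; unfold E_F, phiQ_inv.
  set (P := fun t : nat * nat * nat =>
              let '(a0, b0, c0) := t in in_SQ q a0 b0 c0 /\ phiQ q a0 b0 c0 = phiQ q a b c).
  assert (Ht : P (epsilon (inhabits (0%nat, 0%nat, 0%nat)) P))
    by (apply epsilon_spec; exists (a, b, c); cbn; auto).
  destruct (epsilon _ P) as [[a0 b0] c0]; destruct Ht as [H0 E0].
  destruct (phiQ_inj a0 b0 c0 a b c H0 H E0) as (-> & -> & ->); reflexivity.
Qed.

End Blocks.

Lemma q_ge_2 q m : basic_sequence q -> (1 <= m)%nat -> 2 <= INR (q m).
Proof. intros Hq Hm; apply (le_INR 2), Hq, Hm. Qed.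

Section Thresholds.

Variable q : nat -> nat.
Hypothesis q_basic : basic_sequence q.
Hypothesis q_infinite : infinite_in_limit q.

Lemma nu_spec j :
  (1 <= nu q j)%nat /\ forall m, (nu q j <= m)%nat -> (2 * j * j <= q m)%nat.
Proof.
  apply (minN_spec (fun N => (1 <= N)%nat /\ forall m, (N <= m)%nat -> (2 * j * j <= q m)%nat)).
  destruct (q_infinite (2 * j * j)%nat) as [N HN].
  exists (Nat.max 1 N); split; [lia |]; intros m Hm; apply HN; lia.
Qed.

Lemma nu_1 : (nu q 1 <= 1)%nat.
Proof.
  apply (minN_spec (fun N => (1 <= N)%nat /\ forall m, (N <= m)%nat -> (2 * 1 * 1 <= q m)%nat));
    [exists 1%nat |]; split; try lia; intros m Hm; specialize (q_basic m Hm); lia.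
Qed.

(* The recursion defining l_i is designed exactly so that nu_{i+1} <= L_i + 1. *)
Lemma nu_le_L_seq i : (nu q (S i) - 1 <= L_seq q i)%nat.
Proof.
  destruct i as [|[|i]].
  - pose proof nu_1; cbn; lia.
  - cbn; lia.
  - set (P := fun k => (1 <= k)%nat /\
                (nu q (S (S i) + 1) - 1 <= L_seq q (S i) + S (S i) * k)%nat).
    change (nu q (S (S (S i))) - 1 <= L_seq q (S i) + S (S i) * Nat.max (minN P) 1)%nat.
    destruct (minN_spec P) as [[_ HP] _];
      [exists (nu q (S (S i) + 1)); split; [apply nu_spec | nia] |].
    replace (S (S (S i))) with (S (S i) + 1)%nat by lia; nia.
Qed.

Lemma q_ge_block a m : (1 <= a)%nat -> (L_seq q (a - 1) < m)%nat -> (2 * a * a <= q m)%nat.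
Proof.
  intros Ha Hm; destruct a as [|a]; [lia |].
  pose proof (nu_le_L_seq a); replace (S a - 1)%nat with a in Hm by lia.
  apply (nu_spec (S a)); lia.
Qed.

End Thresholds.

(** * The digits of a special sequence *)

Lemma window_digit_range (a c : nat) (e Q : R) :
  (1 < c <= a)%nat -> 2 * INR a ^ 2 <= Q ->
  INR (c - 1) / INR a - 1 / (2 * INR a ^ 2) <= e / Q <= INR (c - 1) / INR a + 1 / (2 * INR a ^ 2) ->
  0 <= e <= Q - 2.
Proof.
  intros Hc HQ [Lo Hi].
  assert (Ha : 2 <= INR a) by (apply (le_INR 2); lia).
  assert (Hc1 : 1 <= INR (c - 1) <= INR a - 1).
  { split; [apply (le_INR 1); lia |].
    rewrite minus_INR by lia; apply Rplus_le_compat_r, le_INR; lia. }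
  assert (HQp : 0 < Q) by nra.
  set (r := e / Q) in *; replace e with (r * Q) by (unfold r; field; lra).
  set (A := 2 * INR a ^ 2) in *.
  assert (Hlo : r * A >= 2 * INR a - 1).
  { apply Rmult_le_compat_r with (r := A) in Lo; [| unfold A; nra].
    replace ((INR (c - 1) / INR a - 1 / A) * A) with (2 * INR a * INR (c - 1) - 1) in Lo
      by (unfold A; field; lra).
    nra. }
  assert (Hhi : r * A <= A - 2 * INR a + 1).
  { apply Rmult_le_compat_r with (r := A) in Hi; [| unfold A; nra].
    replace ((INR (c - 1) / INR a + 1 / A) * A) with (2 * INR a * INR (c - 1) + 1) in Hi
      by (unfold A; field; lra).
    unfold A in *; nra. }
  (* r <= 1 - (2a - 1)/A and Q >= A give r Q <= Q - (2a - 1) *)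
  assert (HA : 0 < A) by (unfold A; nra).
  split; [nra |].
  assert (r * Q * A <= (Q - 2) * A) by nra.
  nra.
Qed.

Section SpecialDigits.

Variables (q : nat -> nat) (F : nat -> nat -> nat -> Z).
Hypothesis q_basic : basic_sequence q.
Hypothesis q_infinite : infinite_in_limit q.
Hypothesis F_special : Q_special q F.

Lemma special_digit_window a b c : in_SQ q a b c ->
  INR (c - 1) / INR a - 1 / (2 * INR a ^ 2) <= IZR (F a b c) / INR (q (phiQ q a b c))
  <= INR (c - 1) / INR a + 1 / (2 * INR a ^ 2).
Proof.
  intros H; destruct (F_special a b c H) as [Hc1 Hc]; destruct H as (Ha & _ & Hc0 & _).
  destruct (Nat.eq_dec c 1) as [-> | Hne]; [| apply Hc; lia].
  rewrite Hc1 by reflexivity; cbn [Nat.sub INR IZR].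
  assert (1 <= INR a) by (apply (le_INR 1); exact Ha).
  assert (0 < 1 / (2 * INR a ^ 2)) by (apply Rdiv_lt_0_compat; nra).
  unfold Rdiv; rewrite !Rmult_0_l; lra.
Qed.

Lemma special_digit_range a b c : in_SQ q a b c ->
  0 <= IZR (F a b c) <= INR (q (phiQ q a b c)) - 2.
Proof.
  intros H; pose proof (phiQ_range q a b c H); pose proof (special_digit_window a b c H).
  destruct (F_special a b c H) as [Hc1 _]; destruct H as (Ha & _ & Hc0 & _ & Hca).
  destruct (Nat.eq_dec c 1) as [-> | Hne].
  - rewrite Hc1 by reflexivity.
    assert (2 <= INR (q (phiQ q a b 1))) by (apply q_ge_2; [assumption | lia]); cbn; lra.
  - apply (window_digit_range a c); [lia | | assumption].
    replace (2 * INR a ^ 2) with (INR (2 * a * a)) by (rewrite !mult_INR; cbn; ring).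
    apply le_INR, q_ge_block; auto; lia.
Qed.

Lemma E_F_range m : (1 <= m)%nat -> 0 <= IZR (E_F q F m) <= INR (q m) - 2.
Proof.
  intros Hm; destruct (phiQ_surj q m Hm) as (a & b & c & H & <-).
  rewrite E_F_phiQ by exact H; exact (special_digit_range a b c H).
Qed.

End SpecialDigits.

(** * Cantor series whose digits stay two below the base *)

Lemma frac_part_IZR_plus (z : Z) t : 0 <= t < 1 -> frac_part (IZR z + t) = t.
Proof.
  intros H; unfold frac_part, Int_part.
  rewrite <- (tech_up (IZR z + t) (z + 1)); rewrite ?plus_IZR; [rewrite minus_IZR, plus_IZR | |]; lra.
Qed.

Section CantorSeries.

Variables (q : nat -> nat) (d : nat -> Z).
Hypothesis q_basic : basic_sequence q.
Hypothesis d_range : forall n, (1 <= n)%nat -> 0 <= IZR (d n) <= INR (q n) - 2.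

Let q_S_ge_2 n : 2 <= INR (q (S n)).
Proof. apply q_ge_2; [exact q_basic | lia]. Qed.

Lemma qprod_pos n : 0 < qprod q n.
Proof. induction n; cbn [qprod]; [lra | pose proof (q_S_ge_2 n); nra]. Qed.

Lemma qprod_ge_pow2 n : 2 ^ n <= qprod q n.
Proof.
  induction n; cbn [qprod pow]; [lra |].
  pose proof (q_S_ge_2 n); pose proof (pow_lt 2 n ltac:(lra)); nra.
Qed.

Fixpoint cantor_partial n : R :=
  match n with
  | O => 0
  | S n' => cantor_partial n' + IZR (d n) / qprod q n
  end.

Definition cantor_value : R := Series (fun k => IZR (d (S k)) / qprod q (S k)).

Definition cantor_tail n : R := qprod q n * (cantor_value - cantor_partial n).

Lemma cantor_partial_scaled_int n : exists z : Z, qprod q n * cantor_partial n = IZR z.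
Proof.
  induction n as [|n [z Hz]]; [exists 0%Z; cbn; ring |].
  exists (z * Z.of_nat (q (S n)) + d (S n))%Z.
  rewrite plus_IZR, mult_IZR, <- Hz, <- INR_IZR_INZ; cbn [cantor_partial qprod].
  pose proof (qprod_pos n); pose proof (q_S_ge_2 n); field; lra.
Qed.

Lemma cantor_partial_lim : is_lim_seq cantor_partial cantor_value.
Proof.
  set (u k := IZR (d (S k)) / qprod q (S k)).
  assert (Hu : ex_series u).
  { apply (@ex_series_le R_AbsRing R_CompleteNormedModule _ (fun k => (1 / 2) ^ k));
      [intros k | apply ex_series_geom; rewrite Rabs_right; lra].
    change (norm (u k)) with (Rabs (u k)); unfold u; cbn [qprod].
    pose proof (d_range (S k) ltac:(lia)); pose proof (qprod_pos k);
      pose proof (qprod_ge_pow2 k); pose proof (q_S_ge_2 k).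
    rewrite Rabs_right by (apply Rle_ge, Rdiv_le_0_compat; nra).
    (* each term is at most 1/(q_1...q_k) <= 2^-k *)
    apply Rle_trans with (1 / qprod q k).
    - replace (1 / qprod q k) with (INR (q (S k)) / (qprod q k * INR (q (S k))))
        by (field; lra).
      apply Rmult_le_compat_r; [apply Rlt_le, Rinv_0_lt_compat; nra | lra].
    - rewrite Rdiv_1_l, Rdiv_1_l, pow_inv.
      apply Rinv_le_contravar; [apply pow_lt |]; lra. }
  apply is_lim_seq_incr_1, is_lim_seq_ext with (u := sum_n u).
  - induction n as [|n IH]; [rewrite sum_O; cbn [cantor_partial]; unfold u; ring |].
    rewrite sum_Sn, IH; reflexivity.
  - exact (Series_correct _ Hu).
Qed.

(* The invariant [1 - q_1...q_n / q_1...q_{n+k}] is what makes the induction go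
   through: the next digit contributes at most [(q - 1)/q] of the last unit. *)
Lemma cantor_partial_gap n k :
  0 <= qprod q n * (cantor_partial (n + k) - cantor_partial n)
    <= 1 - qprod q n / qprod q (n + k).
Proof.
  pose proof (qprod_pos n) as Hn; induction k as [|k IH].
  - rewrite Nat.add_0_r; replace (qprod q n / qprod q n) with 1 by (field; lra); lra.
  - rewrite Nat.add_succ_r; cbn [cantor_partial qprod].
    pose proof (qprod_pos (n + k)); pose proof (d_range (S (n + k)) ltac:(lia));
      pose proof (q_S_ge_2 (n + k)).
    set (Q := INR (q (S (n + k)))) in *; set (E := IZR (d (S (n + k)))) in *.
    set (P := qprod q n / qprod q (n + k)) in IH.
    assert (0 < P) by (apply Rdiv_lt_0_compat; lra).
    assert (HE : 0 <= E / Q <= 1 - 1 / Q).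
    { split; [apply Rdiv_le_0_compat; lra |].
      replace (1 - 1 / Q) with ((Q - 1) / Q) by (field; lra).
      apply Rmult_le_compat_r; [apply Rlt_le, Rinv_0_lt_compat |]; lra. }
    replace (qprod q n * (cantor_partial (n + k) + E / (qprod q (n + k) * Q) - cantor_partial n))
      with (qprod q n * (cantor_partial (n + k) - cantor_partial n) + P * (E / Q))
      by (unfold P; field; lra).
    replace (qprod q n / (qprod q (n + k) * Q)) with (P * (1 / Q)) by (unfold P; field; lra).
    nra.
Qed.

Lemma cantor_tail_range n : 0 <= cantor_tail n <= 1.
Proof.
  assert (Hlim : is_lim_seq (fun k => qprod q n * (cantor_partial (k + n) - cantor_partial n))
                   (cantor_tail n)).
  { apply (is_lim_seq_scal_l _ (qprod q n) (cantor_value - cantor_partial n)).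
    apply (is_lim_seq_minus' _ _ cantor_value); [| apply is_lim_seq_const].
    apply (is_lim_seq_incr_n cantor_partial n), cantor_partial_lim. }
  assert (Hgap : forall k, 0 <= qprod q n * (cantor_partial (k + n) - cantor_partial n) <= 1).
  { intros k; rewrite Nat.add_comm; pose proof (cantor_partial_gap n k).
    assert (0 <= qprod q n / qprod q (n + k))
      by (apply Rdiv_le_0_compat; [apply Rlt_le |]; apply qprod_pos).
    lra. }
  split.
  - change (Rbar_le 0 (cantor_tail n)).
    apply (is_lim_seq_le (fun _ => 0) _ 0 _ (fun k => proj1 (Hgap k)) (is_lim_seq_const 0) Hlim).
  - change (Rbar_le (cantor_tail n) 1).
    apply (is_lim_seq_le _ (fun _ => 1) _ 1 (fun k => proj2 (Hgap k)) Hlim (is_lim_seq_const 1)).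
Qed.

Lemma cantor_tail_S n :
  cantor_tail n = (IZR (d (S n)) + cantor_tail (S n)) / INR (q (S n)).
Proof.
  unfold cantor_tail; cbn [cantor_partial qprod].
  pose proof (qprod_pos n); pose proof (q_S_ge_2 n); field; lra.
Qed.

Lemma frac_part_cantor_value n : frac_part (qprod q n * cantor_value) = cantor_tail n.
Proof.
  destruct (cantor_partial_scaled_int n) as [z Hz].
  replace (qprod q n * cantor_value) with (IZR z + cantor_tail n)
    by (unfold cantor_tail; rewrite <- Hz; ring).
  apply frac_part_IZR_plus; pose proof (cantor_tail_range n); split; [lra |].
  (* the digit is at most q - 2, so the next tail cannot reach a full unit *)
  rewrite cantor_tail_S; pose proof (cantor_tail_range (S n));
    pose proof (d_range (S n) ltac:(lia)); pose proof (q_S_ge_2 n).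
  apply Rmult_lt_reg_r with (INR (q (S n))); [lra |].
  unfold Rdiv; rewrite Rmult_assoc, Rinv_l; lra.
Qed.

Lemma frac_part_cantor_value_bounds n :
  let Q := INR (q (S n)) in
  IZR (d (S n)) / Q <= frac_part (qprod q n * cantor_value) <= IZR (d (S n)) / Q + 1 / Q.
Proof.
  intros Q; rewrite frac_part_cantor_value, cantor_tail_S; fold Q.
  pose proof (cantor_tail_range (S n)); assert (HQ : 2 <= Q) by apply q_S_ge_2.
  unfold Rdiv; rewrite Rmult_plus_distr_r.
  assert (0 < / Q) by (apply Rinv_0_lt_compat; lra).
  split; [| apply Rplus_le_compat_l]; nra.
Qed.

End CantorSeries.

Lemma x_F_cantor_value q F : x_F q F = cantor_value q (E_F q F).
Proof. reflexivity. Qed.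

(** * Uniform distribution of sequences close to the block grid *)

(* Index [L_a + b (a+1) + j] is the [j]-th point of round [b] of block [a+1]. *)
Definition grid_close (q : nat -> nat) (y : nat -> R) : Prop :=
  forall a b j, (b < l_seq q (S a))%nat -> (j <= a)%nat ->
    INR j / INR (S a) - 1 / (2 * INR (S a) ^ 2) <= y (L_seq q a + b * S a + j)%nat
    <= INR j / INR (S a) + 1 / INR (S a) ^ 2.

Lemma x_F_grid_close q F : basic_sequence q -> infinite_in_limit q -> Q_special q F ->
  grid_close q (fun n => frac_part (qprod q n * x_F q F)).
Proof.
  intros Hq Hinf HF a b j Hb Hj; set (n := (L_seq q a + b * S a + j)%nat).
  assert (HSQ : in_SQ q (S a) (S b) (S j)) by (unfold in_SQ; lia).
  assert (Hphi : phiQ q (S a) (S b) (S j) = S n)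
    by (unfold phiQ, n; replace (S a - 1)%nat with a by lia; lia).
  pose proof (special_digit_window q F HF _ _ _ HSQ) as Hwin.
  rewrite Hphi, <- (E_F_phiQ q F _ _ _ HSQ), Hphi in Hwin.
  replace (S j - 1)%nat with j in Hwin by lia.
  pose proof (frac_part_cantor_value_bounds q (E_F q F) Hq (E_F_range q F Hq Hinf HF) n) as Hfr.
  cbv zeta in Hfr; rewrite <- x_F_cantor_value in Hfr.
  set (A := INR (S a)) in *; set (Q := INR (q (S n))) in *.
  assert (HA : 1 <= A) by (apply (le_INR 1); lia).
  assert (HQ : 2 * A ^ 2 <= Q).
  { replace (2 * A ^ 2) with (INR (2 * S a * S a)) by (unfold A; rewrite !mult_INR; cbn; ring).
    apply le_INR, q_ge_block; [assumption | assumption | lia |].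
    replace (S a - 1)%nat with a by lia; unfold n; lia. }
  assert (1 / Q <= 1 / (2 * A ^ 2))
    by (apply Rmult_le_compat_l, Rinv_le_contravar; nra).
  replace (1 / A ^ 2) with (1 / (2 * A ^ 2) + 1 / (2 * A ^ 2)) by (field; lra).
  lra.
Qed.

Lemma count_in_add y al be s k : count_in y al be (s + k) =
  (count_in y al be s + count_in (fun j => y (s + j)%nat) al be k)%nat.
Proof.
  induction k as [|k IH]; [rewrite Nat.add_0_r; cbn; lia |].
  rewrite Nat.add_succ_r; cbn [count_in]; rewrite IH; lia.
Qed.

Lemma count_in_le y al be k : (count_in y al be k <= k)%nat.
Proof.
  induction k; cbn [count_in]; [lia |].
  destruct (Rle_dec al (y k)); [destruct (Rlt_dec (y k) be) |]; lia.
Qed.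

Ltac case_indicator z k al be :=
  destruct (Rle_dec al (z k)); [destruct (Rlt_dec (z k) be) |]; cbn [INR];
  unfold Rmin, Rmax in *;
  repeat match goal with |- context [Rle_dec ?x ?y] => destruct (Rle_dec x y) end;
  repeat match goal with _ : context [Rle_dec ?x ?y] |- _ => destruct (Rle_dec x y) end.

Lemma count_in_ge_window z al be u v k : 0 <= u ->
  (forall j, (j < k)%nat -> u <= INR j < v -> al <= z j < be) ->
  Rmin v (INR k) - u - 1 <= INR (count_in z al be k).
Proof.
  intros Hu; induction k as [|k IH]; intros H.
  - cbn; unfold Rmin; destruct (Rle_dec v 0); lra.
  - specialize (IH (fun j Hj => H j ltac:(lia))).
    assert (Hk : u <= INR k < v -> al <= z k < be) by (apply H; lia).
    cbn [count_in]; rewrite plus_INR, S_INR in *.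
    pose proof (pos_INR k); pose proof (pos_INR (count_in z al be k)).
    case_indicator z k al be; destruct (Rle_dec u (INR k)); try lra;
      assert (INR k < v) by lra; specialize (Hk ltac:(lra)); lra.
Qed.

Lemma count_in_le_window z al be u v k :
  (forall j, (j < k)%nat -> al <= z j < be -> u <= INR j < v) ->
  INR (count_in z al be k) <= Rmax 0 (Rmin (INR k) (v + 1) - u).
Proof.
  induction k as [|k IH]; intros H.
  - cbn; unfold Rmax; destruct (Rle_dec 0 _); lra.
  - specialize (IH (fun j Hj => H j ltac:(lia))).
    assert (Hk : al <= z k < be -> u <= INR k < v) by (apply H; lia).
    cbn [count_in]; rewrite plus_INR, S_INR in *.
    pose proof (pos_INR k); pose proof (pos_INR (count_in z al be k)).
    case_indicator z k al be; try lra; specialize (Hk ltac:(lra)); lra.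
Qed.

Definition discrepancy (y : nat -> R) (al be : R) (N : nat) : R :=
  INR (count_in y al be N) - (be - al) * INR N.

Lemma discrepancy_add y al be s k : discrepancy y al be (s + k) =
  discrepancy y al be s + discrepancy (fun j => y (s + j)%nat) al be k.
Proof. unfold discrepancy; rewrite count_in_add, !plus_INR; ring. Qed.

Lemma Rabs_discrepancy_le y al be k : 0 <= be - al <= 1 ->
  Rabs (discrepancy y al be k) <= INR k.
Proof.
  intros H; unfold discrepancy.
  pose proof (le_INR _ _ (count_in_le y al be k)); pose proof (pos_INR (count_in y al be k)).
  apply Rabs_le; nra.
Qed.

Lemma Rabs_discrepancy_round z al be a : 0 <= al -> al < be -> be <= 1 -> (1 <= a)%nat ->
  (forall j, (j < a)%nat ->
     INR j / INR a - 1 / (2 * INR a ^ 2) <= z j <= INR j / INR a + 1 / INR a ^ 2) ->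
  Rabs (discrepancy z al be a) <= 3.
Proof.
  intros H0 H1 H2 Ha Hz; unfold discrepancy; set (A := INR a) in *.
  assert (HA : 1 <= A) by (apply (le_INR 1); exact Ha).
  set (e := 1 / (2 * A ^ 2)).
  assert (He : 1 / A ^ 2 = 2 * e) by (unfold e; field; lra).
  assert (HeA : e * A = 1 / (2 * A)) by (unfold e; field; lra).
  assert (Hinv : 0 < 1 / A <= 1).
  { split; [apply Rdiv_lt_0_compat; lra |].
    rewrite Rdiv_1_l, <- Rinv_1; apply Rinv_le_contravar; lra. }
  assert (Hinv2 : 1 / (2 * A) = (1 / A) / 2) by (field; lra).
  assert (Hdiv : forall j : nat, INR j = (INR j / A) * A) by (intros; field; lra).
  (* index j is surely counted when A al + 1/(2A) <= j < A be - 1/A, and is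
     counted only if A al - 1/A <= j < A be + 1/(2A) *)
  assert (Hlo : INR (count_in z al be a) >= (be - al) * A - 3).
  { pose proof (count_in_ge_window z al be (A * al + 1 / (2 * A)) (A * be - 1 / A) a) as Hc.
    fold A in Hc.
    replace (Rmin (A * be - 1 / A) A) with (A * be - 1 / A) in Hc
      by (unfold Rmin; destruct (Rle_dec (A * be - 1 / A) A); nra).
    enough (A * be - 1 / A - (A * al + 1 / (2 * A)) - 1 <= INR (count_in z al be a)) by nra.
    apply Hc; [apply Rplus_le_le_0_compat; nra |].
    intros j Hj [Hu Hv]; specialize (Hz j Hj); rewrite He in Hz; fold e in Hz.
    pose proof (Hdiv j); set (t := INR j / A) in *.
    assert (t * A >= (al + e) * A) by nra; assert (t * A < (be - 2 * e) * A) by nra.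
    nra. }
  assert (Hhi : INR (count_in z al be a) <= (be - al) * A + 3).
  { pose proof (count_in_le_window z al be (A * al - 1 / A) (A * be + 1 / (2 * A)) a) as Hc.
    fold A in Hc; eapply Rle_trans; [apply Hc |].
    - intros j Hj [Hu Hv]; specialize (Hz j Hj); rewrite He in Hz; fold e in Hz.
      pose proof (Hdiv j); set (t := INR j / A) in *.
      split; nra.
    - unfold Rmax, Rmin; destruct (Rle_dec A (A * be + 1 / (2 * A) + 1));
        destruct (Rle_dec 0 _); nra. }
  apply Rabs_le; lra.
Qed.

Lemma uniformly_distributed_of_sublinear_discrepancy y :
  (forall al be, 0 <= al -> al < be -> be <= 1 -> forall e, 0 < e ->
     exists C, forall n, Rabs (discrepancy y al be n) <= C + e * INR n) ->
  uniformly_distributed y.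
Proof.
  intros Hsub al be H0 H1 H2; apply is_lim_seq_spec; intros eps.
  pose proof (cond_pos eps) as Heps.
  destruct (Hsub al be H0 H1 H2 (eps / 2) ltac:(lra)) as [C HC].
  destruct (archimed (2 * Rabs C / eps)) as [HN _].
  exists (S (Z.to_nat (up (2 * Rabs C / eps)))); intros n Hn.
  assert (HCn : 2 * Rabs C < eps * INR n).
  { apply le_INR in Hn; rewrite S_INR, INR_IZR_INZ in Hn.
    assert (Hup : IZR (up (2 * Rabs C / eps)) <= IZR (Z.of_nat (Z.to_nat (up (2 * Rabs C / eps)))))
      by (apply IZR_le; lia).
    assert (Hlt : 2 * Rabs C / eps < INR n) by lra.
    apply Rmult_lt_compat_l with (r := eps) in Hlt; [| lra].
    replace (eps * (2 * Rabs C / eps)) with (2 * Rabs C) in Hlt by (field; lra); exact Hlt. }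
  assert (Hnp : 0 < INR n) by (pose proof (Rabs_pos C); nra).
  specialize (HC n); unfold discrepancy in HC; pose proof (Rle_abs C).
  replace (INR (count_in y al be n) / INR n - (be - al))
    with ((INR (count_in y al be n) - (be - al) * INR n) / INR n) by (field; lra).
  unfold Rdiv; rewrite Rabs_mult, Rabs_inv, (Rabs_right (INR n)) by lra.
  apply Rmult_lt_reg_r with (INR n); [lra |].
  rewrite Rmult_assoc, Rinv_l by lra; lra.
Qed.

Fixpoint rounds (q : nat -> nat) (i : nat) : nat :=
  match i with
  | O => O
  | S i' => (rounds q i' + l_seq q (S i'))%nat
  end.

Lemma rounds_mono q i j : (i <= j)%nat -> (rounds q i <= rounds q j)%nat.
Proof. induction 1; cbn; lia. Qed.

(* Beyond block K every round has more than K points. *)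
Lemma rounds_le q K a : (K * rounds q a <= K * rounds q K + L_seq q a)%nat.
Proof.
  induction a as [|a IH]; cbn [rounds]; [lia |].
  destruct (le_lt_dec (S a) K) as [HaK | HKa].
  - pose proof (Nat.mul_le_mono_l _ _ K (rounds_mono q (S a) K HaK)) as Hmono.
    cbn [rounds] in Hmono; lia.
  - rewrite L_seq_S; nia.
Qed.

Lemma triangular_le_sublinear k n e : 0 < e -> (k * (k + 1) <= 2 * n)%nat ->
  INR k <= 2 / e + e * INR n.
Proof.
  intros He Hkn.
  assert (Hr : INR k * (INR k + 1) <= 2 * INR n).
  { replace (INR k * (INR k + 1)) with (INR (k * (k + 1))) by (rewrite mult_INR, plus_INR; reflexivity).
    replace (2 * INR n) with (INR (2 * n)) by (rewrite mult_INR; reflexivity).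
    apply le_INR, Hkn. }
  pose proof (pos_INR k); pose proof (pos_INR n).
  assert (H2e : 0 < 2 / e) by (apply Rdiv_lt_0_compat; lra).
  destruct (Rle_dec (INR k) (2 / e)) as [Hk | Hk]; [nra |].
  assert (e * INR k > 2) by (replace 2 with (e * (2 / e)) by (field; lra); nra).
  nra.
Qed.

Section GridClose.

Variables (q : nat -> nat) (y : nat -> R) (al be : R).
Hypothesis y_grid : grid_close q y.
Hypotheses (al_ge0 : 0 <= al) (al_lt_be : al < be) (be_le1 : be <= 1).

Lemma Rabs_discrepancy_round_step a b : (b < l_seq q (S a))%nat ->
  Rabs (discrepancy y al be (L_seq q a + S b * S a))
    <= Rabs (discrepancy y al be (L_seq q a + b * S a)) + 3.
Proof.
  intros Hb; set (s := (L_seq q a + b * S a)%nat).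
  replace (L_seq q a + S b * S a)%nat with (s + S a)%nat by (unfold s; lia).
  rewrite discrepancy_add.
  assert (Rabs (discrepancy (fun j => y (s + j)%nat) al be (S a)) <= 3).
  { apply Rabs_discrepancy_round; try assumption; [lia |].
    intros j Hj; apply (y_grid a b j); lia. }
  pose proof (Rabs_triang (discrepancy y al be s) (discrepancy (fun j => y (s + j)%nat) al be (S a))).
  lra.
Qed.

Lemma Rabs_discrepancy_round_start a b : (b <= l_seq q (S a))%nat ->
  Rabs (discrepancy y al be (L_seq q a + b * S a)) <= 3 * INR (rounds q a + b).
Proof.
  revert b; induction a as [|a IHa]; intros b; induction b as [|b IHb]; intros Hb.
  - unfold discrepancy; cbn; rewrite Rmult_0_r, Rminus_0_r, Rabs_R0; lra.
  - eapply Rle_trans; [apply Rabs_discrepancy_round_step; lia |].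
    rewrite Nat.add_succ_r, S_INR; specialize (IHb ltac:(lia)); lra.
  - rewrite Nat.mul_0_l, !Nat.add_0_r, L_seq_S, Nat.mul_comm; cbn [rounds].
    apply IHa; lia.
  - eapply Rle_trans; [apply Rabs_discrepancy_round_step; lia |].
    rewrite Nat.add_succ_r, S_INR; specialize (IHb ltac:(lia)); lra.
Qed.

Lemma Rabs_discrepancy_grid_le K e : (1 <= K)%nat -> 0 < e -> forall n,
  Rabs (discrepancy y al be n) <= 3 * INR (rounds q K) + 2 / e + (3 / INR K + e) * INR n.
Proof.
  intros HK He n; destruct (index_decompose q n) as (a & b & k & Hb & Hk & En).
  set (s := (L_seq q a + b * S a)%nat).
  assert (Hn : Rabs (discrepancy y al be n) <= 3 * INR (rounds q a + b) + INR k).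
  { replace n with (s + k)%nat by (unfold s; lia); rewrite discrepancy_add.
    pose proof (Rabs_discrepancy_round_start a b ltac:(lia)) as Hs; fold s in Hs.
    pose proof (Rabs_discrepancy_le (fun j => y (s + j)%nat) al be k ltac:(lra)).
    pose proof (Rabs_triang (discrepancy y al be s) (discrepancy (fun j => y (s + j)%nat) al be k)).
    lra. }
  assert (Hrounds : INR K * INR (rounds q a + b) <= INR K * INR (rounds q K) + INR n).
  { rewrite <- !mult_INR, <- plus_INR; apply le_INR.
    destruct (le_lt_dec (S a) K) as [HaK | HKa].
    - pose proof (rounds_mono q (S a) K HaK) as Hmono; cbn [rounds] in Hmono; nia.
    - pose proof (rounds_le q K a); nia. }
  assert (HKr : 0 < INR K) by (apply (lt_INR 0); lia).
  assert (HR : INR (rounds q a + b) <= INR (rounds q K) + INR n / INR K).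
  { apply Rmult_le_reg_l with (INR K); [lra |].
    replace (INR K * (INR (rounds q K) + INR n / INR K)) with (INR K * INR (rounds q K) + INR n)
      by (field; lra).
    exact Hrounds. }
  assert (Hkn : INR k <= 2 / e + e * INR n).
  { apply triangular_le_sublinear; [exact He |].
    pose proof (L_seq_triangular q a); nia. }
  replace ((3 / INR K + e) * INR n) with (3 * (INR n / INR K) + e * INR n) by (field; lra).
  lra.
Qed.

End GridClose.

Lemma grid_close_uniformly_distributed q y : grid_close q y -> uniformly_distributed y.
Proof.
  intros Hy; apply uniformly_distributed_of_sublinear_discrepancy.
  intros al be H0 H1 H2 e He.
  destruct (archimed (6 / e)) as [HK _].
  set (K := S (Z.to_nat (up (6 / e)))).
  assert (HKe : 3 / INR K <= e / 2).
  { assert (6 / e < INR K).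
    { unfold K; rewrite S_INR, INR_IZR_INZ.
      assert (IZR (up (6 / e)) <= IZR (Z.of_nat (Z.to_nat (up (6 / e))))) by (apply IZR_le; lia).
      lra. }
    assert (0 < 6 / e) by (apply Rdiv_lt_0_compat; lra).
    apply Rmult_le_reg_r with (2 * INR K / e); [apply Rdiv_lt_0_compat; lra |].
    replace (3 / INR K * (2 * INR K / e)) with (6 / e) by (field; lra).
    replace (e / 2 * (2 * INR K / e)) with (INR K) by (field; lra).
    lra. }
  exists (3 * INR (rounds q K) + 2 / (e / 2)); intros n.
  eapply Rle_trans; [apply (Rabs_discrepancy_grid_le q y al be Hy H0 H1 H2 K (e / 2)); unfold K; lia || lra |].
  pose proof (pos_INR n); nra.
Qed.

Theorem mainTheorem1 (q : nat -> nat) (F : nat -> nat -> nat -> Z) :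
  basic_sequence q -> infinite_in_limit q -> Q_special q F ->
  Q_distribution_normal q (x_F q F).
Proof.
  intros Hq Hinf HF.
  exact (grid_close_uniformly_distributed q _ (x_F_grid_close q F Hq Hinf HF)).
Qed.
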